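(* Let $G$ be a star with one central vertex $\mathsf{v}_1$ and $N\ge2$ semi-infinite edges, of which $\mathsf{e}_1,\dots,\mathsf{e}_L$ ($1\le L<N$) are incoming and identified with $(-\infty,0]$ and $\mathsf{e}_{L+1},\dots,\mathsf{e}_N$ are outgoing and identified with $[0,\infty)$, the central vertex corresponding to $0$ on every edge. Consider on $G$ the system $$\partial_tu_i-a_i\partial_x^2\partial_tu_i+b_iu_i\partial_xu_i=0\ \text{ on }\mathsf{e}_i,\ t>0,\qquad u_j(t,0)=u_k(t,0)\ \ (1\le j,k\le N,\ t\ge0),$$ $$\sum_{i=1}^L a_i\partial_xu_i(t,0)-\sum_{i=L+1}^N a_i\partial_xu_i(t,0)=0\quad (t\ge0),$$ i.e. (BBMG) with all $d_i=0$, where $a_i>0$ and $b_i\in\mathbb{R}\setminus\{0\}$. Assume $$\sqrt{\frac{a_i}{a_1}}=\frac{b_i}{b_1}>0\quad\text{for all }1\le i\le N,\qquad\text{and}\qquad \sum_{i=1}^Lb_i=\sum_{j=L+1}^Nb_j.$$ Then for every $c_1>0$, setting $c_i=\sqrt{a_i/a_1}\,c_1$ for $1\le i\le N$, there exist real constants $\tau_i$ such that the function $u$ given on each edge by $u_i(t,x)=\varphi_i(x-c_it+\tau_i)$, where $$\varphi_i(z)=\frac{6c_i}{b_i}\cdot\frac{1}{1+\cosh\big(z/\sqrt{a_i}\big)},\qquad z\in\mathbb{R},$$ is a strong solution of this system.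
   Context: A strong solution is a function $u$ which is continuous on the star for each $t$, with $u_i\in\mathcal{C}^{1,1}(\mathsf{e}_i\times[0,\infty))$ and $\partial_tu_i\in\mathcal{C}^{2,0}(\mathsf{e}_i\times[0,\infty))$ on each edge, and which satisfies the system pointwise. The profile $\varphi_i$ is the solitary wave $\frac{6(c-d)}{b}\big(1+\cosh(\sqrt{(c-d)/(ac)}\,z)\big)^{-1}$ with $a=a_i$, $b=b_i$, $c=c_i$, $d=0$. No conditions are imposed at infinity and no initial condition is imposed. *)

From Stdlib Require Import Reals Lra.
From Coquelicot Require Import Coquelicot.
Open Scope R_scope.

(* A function on the star graph: u i t x is the value on edge i (1 <= i <= N)
   at time t and position x. *)
Definition on_edge (L i : nat) (x : R) : Prop :=
  if (i <=? L)%nat then x <= 0 else 0 <= x.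

Definition in_dom (L i : nat) (t x : R) : Prop := 0 <= t /\ on_edge L i x.

Definition pt (f : R -> R -> R) : R -> R -> R :=
  fun t x => Derive (fun s => f s x) t.
Definition px (f : R -> R -> R) : R -> R -> R :=
  fun t x => Derive (fun y => f t y) x.

Definition cont_on_dom (L i : nat) (f : R -> R -> R) : Prop :=
  forall t x, in_dom L i t x ->
  forall eps, 0 < eps -> exists delta, 0 < delta /\
    forall s y, in_dom L i s y -> Rabs (s - t) < delta -> Rabs (y - x) < delta ->
      Rabs (f s y - f t x) < eps.

Definition C11 (L i : nat) (f : R -> R -> R) : Prop :=
  (forall t x, in_dom L i t x ->
     ex_derive (fun s => f s x) t /\ ex_derive (fun y => f t y) x) /\
  cont_on_dom L i f /\ cont_on_dom L i (pt f) /\ cont_on_dom L i (px f).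

Definition C20 (L i : nat) (f : R -> R -> R) : Prop :=
  (forall t x, in_dom L i t x ->
     ex_derive (fun y => f t y) x /\ ex_derive (fun y => px f t y) x) /\
  cont_on_dom L i f /\ cont_on_dom L i (px f) /\ cont_on_dom L i (px (px f)).

Definition strong_solution (N L : nat) (a b : nat -> R)
    (u : nat -> R -> R -> R) : Prop :=
  (forall i, (1 <= i <= N)%nat -> C11 L i (u i) /\ C20 L i (pt (u i))) /\
  (forall j k t, (1 <= j <= N)%nat -> (1 <= k <= N)%nat -> 0 <= t ->
     u j t 0 = u k t 0) /\
  (forall t, 0 <= t ->
     sum_n_m (fun i => a i * px (u i) t 0) 1 L
     - sum_n_m (fun i => a i * px (u i) t 0) (S L) N = 0) /\
  (forall i t x, (1 <= i <= N)%nat -> 0 < t -> on_edge L i x ->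
     pt (u i) t x - a i * px (px (pt (u i))) t x
       + b i * u i t x * px (u i) t x = 0).

Definition profile (a b c d : R) (z : R) : R :=
  6 * (c - d) / b * / (1 + cosh (sqrt ((c - d) / (a * c)) * z)).

From Stdlib Require Import Reals Lra Lia FunctionalExtensionality.
From Coquelicot Require Import Coquelicot.
Open Scope R_scope.

(* On each edge the profile is the travelling wave B * bump (k_i (x - c_i t)) with
   bump y = 1 / (1 + cosh y), k_i = 1 / sqrt a_i and the amplitude B = 6 c_1 / b_1
   common to all edges.  Since bump'' = bump - 3 bump^2, such a wave solves the BBM
   equation on edge i as soon as a_i k_i^2 = 1 and b_i B = 6 c_i.  The scaling
   sqrt (a_i / a_1) = b_i / b_1 makes k_i c_i = c_1 / sqrt a_1 for every edge, so all
   the waves take the same value at the vertex, and makes a_i k_i proportional to b_i,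
   so the Kirchhoff condition reduces to the balance of the b_i.  All shifts are 0. *)

Definition bump (y : R) : R := / (1 + cosh y).
Definition bump1 (y : R) : R := - sinh y / (1 + cosh y) ^ 2.
Definition bump2 (y : R) : R := (cosh y - 2) / (1 + cosh y) ^ 2.
Definition bump3 (y : R) : R := sinh y * (5 - cosh y) / (1 + cosh y) ^ 3.

Lemma one_add_cosh_pos (y : R) : 0 < 1 + cosh y.
Proof. unfold cosh; pose proof (exp_pos y); pose proof (exp_pos (- y)); lra. Qed.

Ltac derive_bump y :=
  pose proof (one_add_cosh_pos y); pose proof (exp_pos y);
  unfold cosh, sinh in *; auto_derive; rewrite ?exp_Ropp in *;
  [repeat split; nra | field; repeat split; nra].

Lemma is_derive_bump (y : R) : is_derive bump y (bump1 y).
Proof. unfold bump, bump1; derive_bump y. Qed.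

Lemma is_derive_bump1 (y : R) : is_derive bump1 y (bump2 y).
Proof. unfold bump1, bump2; derive_bump y. Qed.

Lemma is_derive_bump2 (y : R) : is_derive bump2 y (bump3 y).
Proof. unfold bump2, bump3; derive_bump y. Qed.

(* The derivative of the profile equation bump2 = bump - 3 bump^2. *)
Lemma bump3_eq (y : R) : bump3 y = bump1 y - 6 * bump y * bump1 y.
Proof. pose proof (one_add_cosh_pos y); unfold bump, bump1, bump3; field; lra. Qed.

Lemma continuity_pt_is_derive (G G' : R -> R) :
  (forall y, is_derive G y (G' y)) -> forall y, continuity_pt G y.
Proof.
  intros HG y; apply derivable_continuous_pt.
  exists (G' y); apply is_derive_Reals, HG.
Qed.

Lemma continuity_pt_bump3 (y : R) : continuity_pt bump3 y.
Proof.
  apply derivable_continuous_pt, ex_derive_Reals_0.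
  pose proof (one_add_cosh_pos y); pose proof (exp_pos y).
  unfold bump3, cosh, sinh in *; auto_derive; rewrite ?exp_Ropp in *.
  repeat apply Rmult_integral_contrapositive_currified; lra.
Qed.

Definition wave (G : R -> R) (B k c tau : R) : R -> R -> R :=
  fun t x => B * G (k * (x - c * t + tau)).

Lemma wave_at_vertex (G : R -> R) (B k c tau t : R) :
  wave G B k c tau t 0 = B * G (k * tau - k * c * t).
Proof. unfold wave; do 2 f_equal; ring. Qed.

Section WaveDerivatives.

Variables G G' : R -> R.
Hypothesis G_deriv : forall y, is_derive G y (G' y).

Lemma is_derive_wave_x (B k c tau t x : R) :
  is_derive (fun y => wave G B k c tau t y) x (wave G' (B * k) k c tau t x).
Proof.
  unfold wave; rewrite Rmult_assoc.
  apply is_derive_scal, (is_derive_comp G); [apply G_deriv | auto_derive; auto; ring].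
Qed.

Lemma is_derive_wave_t (B k c tau t x : R) :
  is_derive (fun s => wave G B k c tau s x) t (wave G' (- (B * k * c)) k c tau t x).
Proof.
  unfold wave; replace (- (B * k * c)) with (B * (- (k * c))) by ring; rewrite Rmult_assoc.
  apply is_derive_scal, (is_derive_comp G); [apply G_deriv | auto_derive; auto; ring].
Qed.

Lemma px_wave (B k c tau : R) : px (wave G B k c tau) = wave G' (B * k) k c tau.
Proof.
  apply functional_extensionality; intros t; apply functional_extensionality; intros x.
  apply is_derive_unique, is_derive_wave_x.
Qed.

Lemma pt_wave (B k c tau : R) : pt (wave G B k c tau) = wave G' (- (B * k * c)) k c tau.
Proof.
  apply functional_extensionality; intros t; apply functional_extensionality; intros x.
  apply is_derive_unique, is_derive_wave_t.
Qed.

End WaveDerivatives.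

Lemma continuity_2d_pt_wave (G : R -> R) (B k c tau t x : R) :
  (forall y, continuity_pt G y) -> continuity_2d_pt (wave G B k c tau) t x.
Proof.
  intros HG; apply continuity_2d_pt_mult; [apply continuity_2d_pt_const |].
  apply continuity_1d_2d_pt_comp; [apply HG |].
  apply continuity_2d_pt_mult; [apply continuity_2d_pt_const |].
  apply continuity_2d_pt_plus; [| apply continuity_2d_pt_const].
  apply continuity_2d_pt_minus; [apply continuity_2d_pt_id2 |].
  apply continuity_2d_pt_mult; [apply continuity_2d_pt_const | apply continuity_2d_pt_id1].
Qed.

Lemma cont_on_dom_wave (L i : nat) (G : R -> R) (B k c tau : R) :
  (forall y, continuity_pt G y) -> cont_on_dom L i (wave G B k c tau).
Proof.
  intros HG t x _ eps Heps.
  destruct (continuity_2d_pt_wave G B k c tau t x HG (mkposreal eps Heps)) as [delta Hdelta].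
  exists delta; split; [apply cond_pos |].
  intros s y _; apply Hdelta.
Qed.

Lemma C11_wave (L i : nat) (G G' : R -> R) (B k c tau : R) :
  (forall y, is_derive G y (G' y)) -> (forall y, continuity_pt G' y) ->
  C11 L i (wave G B k c tau).
Proof.
  intros HG HG'; unfold C11; rewrite (pt_wave G G' HG), (px_wave G G' HG).
  split; [intros t x _; split; eexists; [apply is_derive_wave_t | apply is_derive_wave_x]; auto |].
  repeat split; apply cont_on_dom_wave; eauto using continuity_pt_is_derive.
Qed.

Lemma C20_wave (L i : nat) (G G' G'' : R -> R) (B k c tau : R) :
  (forall y, is_derive G y (G' y)) -> (forall y, is_derive G' y (G'' y)) ->
  (forall y, continuity_pt G'' y) -> C20 L i (wave G B k c tau).
Proof.
  intros HG HG' HG''; unfold C20; rewrite (px_wave G G' HG), (px_wave G' G'' HG').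
  split; [intros t x _; split; eexists; apply is_derive_wave_x; eauto |].
  repeat split; apply cont_on_dom_wave; eauto using continuity_pt_is_derive.
Qed.

Lemma bump_wave_solves_bbm (a b B k c tau t x : R) :
  a * k ^ 2 = 1 -> b * B = 6 * c ->
  let u := wave bump B k c tau in
  pt u t x - a * px (px (pt u)) t x + b * u t x * px u t x = 0.
Proof.
  intros Hk Hamp u; unfold u.
  rewrite (pt_wave _ _ is_derive_bump), (px_wave _ _ is_derive_bump1),
    (px_wave _ _ is_derive_bump2), (px_wave _ _ is_derive_bump).
  unfold wave; rewrite bump3_eq.
  set (w := k * (x - c * t + tau)).
  transitivity (B * k * (- c * bump1 w + c * (a * k ^ 2) * (bump1 w - 6 * bump w * bump1 w)
                         + (b * B) * bump w * bump1 w)); [ring |].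
  rewrite Hk, Hamp; ring.
Qed.

Lemma profile_wave (a b c tau : R) : 0 < a -> 0 < c ->
  (fun t x => profile a b c 0 (x - c * t + tau)) = wave bump (6 * c / b) (/ sqrt a) c tau.
Proof.
  intros Ha Hc; unfold profile, wave, bump.
  replace ((c - 0) / (a * c)) with (/ a) by (field; lra).
  rewrite Rminus_0_r, sqrt_inv; reflexivity.
Qed.

Lemma strong_solution_ext (N L : nat) (a b : nat -> R) (u v : nat -> R -> R -> R) :
  (L <= N)%nat -> (forall i, (1 <= i <= N)%nat -> u i = v i) ->
  strong_solution N L a b v -> strong_solution N L a b u.
Proof.
  intros HLN E [Hreg [Hvertex [Hkirchhoff Hbbm]]].
  split; [| split; [| split]].
  - intros i Hi; rewrite (E i Hi); auto.
  - intros j k t Hj Hk Ht; rewrite (E j Hj), (E k Hk); auto.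
  - intros t Ht; rewrite (sum_n_m_ext_loc _ (fun i => a i * px (v i) t 0) 1 L),
      (sum_n_m_ext_loc _ (fun i => a i * px (v i) t 0) (S L) N)
      by (intros i Hi; rewrite (E i); [reflexivity | lia]).
    auto.
  - intros i t x Hi; rewrite (E i Hi); auto.
Qed.

Lemma bump_waves_strong_solution (N L : nat) (a b k c : nat -> R) (B s m : R) :
  (L <= N)%nat ->
  (forall i, (1 <= i <= N)%nat -> a i * k i ^ 2 = 1) ->
  (forall i, (1 <= i <= N)%nat -> b i * B = 6 * c i) ->
  (forall i, (1 <= i <= N)%nat -> k i * c i = s) ->
  (forall i, (1 <= i <= N)%nat -> a i * k i = m * b i) ->
  sum_n_m b 1 L = sum_n_m b (S L) N ->
  strong_solution N L a b (fun i => wave bump B (k i) (c i) 0).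
Proof.
  intros HLN Hk Hamp Hspeed Hflux Hsum.
  assert (Hvertex : forall i t, (1 <= i <= N)%nat ->
            wave bump B (k i) (c i) 0 t 0 = B * bump (- (s * t))).
  { intros i t Hi; rewrite wave_at_vertex, <- (Hspeed i Hi); do 2 f_equal; ring. }
  assert (Hedge_flux : forall i t, (1 <= i <= N)%nat ->
            a i * px (wave bump B (k i) (c i) 0) t 0 = b i * (m * B * bump1 (- (s * t)))).
  { intros i t Hi; rewrite (px_wave _ _ is_derive_bump), wave_at_vertex, <- (Hspeed i Hi).
    replace (k i * 0 - k i * c i * t) with (- (k i * c i * t)) by ring.
    transitivity ((a i * k i) * B * bump1 (- (k i * c i * t))); [ring |].
    rewrite (Hflux i Hi); ring. }
  split; [| split; [| split]].
  - intros i Hi; split.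
    + apply (C11_wave L i bump bump1); [apply is_derive_bump |].
      apply (continuity_pt_is_derive _ _ is_derive_bump1).
    + rewrite (pt_wave _ _ is_derive_bump).
      apply (C20_wave L i bump1 bump2 bump3);
        auto using is_derive_bump1, is_derive_bump2, continuity_pt_bump3.
  - intros j l t Hj Hl _; rewrite (Hvertex j t Hj), (Hvertex l t Hl); reflexivity.
  - intros t _.
    rewrite (sum_n_m_ext_loc _ (fun i => mult (b i) (m * B * bump1 (- (s * t)))) 1 L),
      (sum_n_m_ext_loc _ (fun i => mult (b i) (m * B * bump1 (- (s * t)))) (S L) N),
      !sum_n_m_mult_r by (intros i Hi; apply Hedge_flux; lia).
    apply Rminus_diag_eq; f_equal; exact Hsum.
  - intros i t x Hi _ _; apply bump_wave_solves_bbm; auto.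
Qed.

Lemma mul_inv_sqrt_sq (a : R) : 0 < a -> a * (/ sqrt a) ^ 2 = 1.
Proof.
  intros Ha; pose proof (sqrt_lt_R0 a Ha); rewrite <- (sqrt_sqrt a) at 1 by lra.
  field; lra.
Qed.

Lemma inv_sqrt_mul_sqrt_div (a1 c1 a : R) :
  0 < a1 -> 0 < a -> / sqrt a * (sqrt (a / a1) * c1) = c1 / sqrt a1.
Proof.
  intros Ha1 Ha; pose proof (sqrt_lt_R0 a Ha); pose proof (sqrt_lt_R0 a1 Ha1).
  rewrite sqrt_div_alt by auto; field; lra.
Qed.

Section ScaledEdge.

Variables a1 b1 c1 a b : R.
Hypothesis a1_pos : 0 < a1.
Hypothesis b1_neq0 : b1 <> 0.
Hypothesis a_pos : 0 < a.
Hypothesis b_neq0 : b <> 0.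
Hypothesis scaling : sqrt (a / a1) = b / b1.

Lemma scaled_edge_amplitude : 6 * (sqrt (a / a1) * c1) / b = 6 * c1 / b1.
Proof. rewrite scaling; field; auto. Qed.

Lemma scaled_edge_flux : a * / sqrt a = sqrt a1 / b1 * b.
Proof.
  pose proof (sqrt_lt_R0 a a_pos); pose proof (sqrt_lt_R0 a1 a1_pos).
  replace b with (b / b1 * b1) by (field; auto).
  rewrite <- scaling, sqrt_div_alt by auto.
  rewrite <- (sqrt_sqrt a) at 1 by lra.
  field; lra.
Qed.

End ScaledEdge.

Theorem theorem5p1 (N L : nat) (a b : nat -> R) (c1 : R) :
  (2 <= N)%nat -> (1 <= L)%nat -> (L < N)%nat ->
  (forall i, (1 <= i <= N)%nat -> 0 < a i) ->
  (forall i, (1 <= i <= N)%nat -> b i <> 0) ->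
  (forall i, (1 <= i <= N)%nat -> sqrt (a i / a 1%nat) = b i / b 1%nat) ->
  (forall i, (1 <= i <= N)%nat -> 0 < b i / b 1%nat) ->
  sum_n_m b 1 L = sum_n_m b (S L) N ->
  0 < c1 ->
  let c := fun i : nat => sqrt (a i / a 1%nat) * c1 in
  exists tau : nat -> R,
    strong_solution N L a b
      (fun i t x => profile (a i) (b i) (c i) 0 (x - c i * t + tau i)).
Proof.
  intros _ _ HLN Ha Hb Hscale _ Hsum Hc1 c.
  assert (H1 : (1 <= 1 <= N)%nat) by lia.
  exists (fun _ => 0).
  apply (strong_solution_ext N L a b _
           (fun i => wave bump (6 * c1 / b 1%nat) (/ sqrt (a i)) (c i) 0)); [lia | |].
  - intros i Hi.
    assert (Hci : 0 < c i)
      by (apply Rmult_lt_0_compat; auto; apply sqrt_lt_R0, Rdiv_lt_0_compat; auto).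
    rewrite profile_wave by auto.
    unfold c at 1; rewrite (scaled_edge_amplitude (a 1%nat) (b 1%nat)); auto.
  - apply (bump_waves_strong_solution N L a b (fun i => / sqrt (a i)) c _
             (c1 / sqrt (a 1%nat)) (sqrt (a 1%nat) / b 1%nat)).
    + lia.
    + intros i Hi; apply mul_inv_sqrt_sq; auto.
    + intros i Hi.
      rewrite <- (scaled_edge_amplitude (a 1%nat) (b 1%nat) c1 (a i) (b i)); auto.
      unfold c; field; auto.
    + intros i Hi; apply inv_sqrt_mul_sqrt_div; auto.
    + intros i Hi; apply scaled_edge_flux; auto.
    + exact Hsum.
Qed.
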